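(* Let $N\ge0$ and let $\hat A=\sum_{n,m=0}^N A_{n,m}|n\rangle\langle m|$ be a single-mode operator supported on Fock states with at most $N$ photons. Then $\hat A$ has approximate operator coherent rank at most $N+1$. One explicit representation is, for nonzero real $\epsilon$, $$\tilde{\hat A}=\sum_{k,l=0}^N c_{k,l}\,\big|\epsilon e^{2\pi i k/(N+1)}\big\rangle\big\langle \epsilon e^{2\pi i l/(N+1)}\big|,\qquad c_{k,l}=\frac{e^{|\epsilon|^2}}{(N+1)^2}\sum_{n,m=0}^N\sqrt{n!m!}\,\frac{A_{n,m}}{\epsilon^{n+m}}\,e^{-2\pi i(kn-lm)/(N+1)},$$ which approximates $\hat A$ arbitrarily accurately as $\epsilon\to0$.
   Context: Single-mode Fock basis $\{|n\rangle\}$; coherent states $|\alpha\rangle=e^{-|\alpha|^2/2}\sum_n\frac{\alpha^n}{\sqrt{n!}}|n\rangle$ (kets with complex arguments such as $\epsilon e^{2\pi ik/(N+1)}$ are coherent states). A state has coherent rank $k$ if it is a superposition of $k$ coherent states; its approximate coherent rank is the smallest $k$ such that for every $\delta>0$ there is a coherent rank $k$ state with fidelity $>1-\delta$ to it. An operator $\hat A$ has (approximate) operator coherent rank $\ell$ iff $\hat A|\vec\alpha\rangle$ has (approximate) coherent rank at most $\ell$ for every coherent state $|\vec\alpha\rangle$. *)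

From Stdlib Require Import Reals.
From Coquelicot Require Import Coquelicot.
Open Scope R_scope.

Notation Cx := Complex.C.

(* Single-mode states: coefficient sequences in the Fock basis, psi n = <n|psi>. *)
Definition state := nat -> Cx.

Fixpoint csum (n : nat) (f : nat -> Cx) : Cx :=
  match n with
  | O => RtoC 0
  | S k => Cplus (csum k f) (f k)
  end.

Definition cis (theta : R) : Cx := (cos theta, sin theta).

Definition coh (a : Cx) : state :=
  fun n => Cmult (RtoC (exp (- (Cmod a ^ 2) / 2) / sqrt (INR (Factorial.fact n))))
                 (Cpow a n).

Definition superpos (k : nat) (c a : nat -> Cx) : state :=
  fun n => csum k (fun j => Cmult (c j) (coh (a j) n)).

Definition norm2 (psi : state) : R := Series (fun n => Cmod (psi n) ^ 2).

Definition inner (psi phi : state) : Cx :=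
  (Series (fun n => Re (Cmult (Cconj (psi n)) (phi n))),
   Series (fun n => Im (Cmult (Cconj (psi n)) (phi n)))).

Definition fidelity (psi phi : state) : R :=
  Cmod (inner psi phi) ^ 2 / (norm2 psi * norm2 phi).

(* approximate coherent rank at most k.  The zero vector is the empty
   superposition (coherent rank 0), so it is included explicitly (its
   fidelity is undefined). *)
Definition approx_coherent_rank_le (k : nat) (psi : state) : Prop :=
  psi = (fun _ => RtoC 0) \/
  forall delta : R, 0 < delta ->
    exists c a : nat -> Cx, fidelity psi (superpos k c a) > 1 - delta.

Definition approx_op_coherent_rank_le (l : nat) (Aop : state -> state) : Prop :=
  forall alpha : Cx, approx_coherent_rank_le l (Aop (coh alpha)).

Definition op_apply (N : nat) (A : nat -> nat -> Cx) (psi : state) : state :=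
  fun n => csum (S N) (fun m => Cmult (A n m) (psi m)).

Definition beta (N : nat) (eps : R) (k : nat) : Cx :=
  Cmult (RtoC eps) (cis (2 * PI * INR k / INR (S N))).

Definition ctilde (N : nat) (A : nat -> nat -> Cx) (eps : R) (k l : nat) : Cx :=
  Cmult (RtoC (exp (Rabs eps ^ 2) / INR (S N) ^ 2))
    (csum (S N) (fun n => csum (S N) (fun m =>
       Cmult (RtoC (sqrt (INR (Factorial.fact n) * INR (Factorial.fact m)) / eps ^ (n + m)))
         (Cmult (A n m)
            (cis (- (2 * PI * (INR k * INR n - INR l * INR m)) / INR (S N))))))).

(* Fock matrix element <n| Atilde |m> of
   Atilde = sum_{k,l<=N} c_{k,l} |beta_k><beta_l| *)
Definition Atilde_elem (N : nat) (A : nat -> nat -> Cx) (eps : R) (n m : nat) : Cx :=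
  csum (S N) (fun k => csum (S N) (fun l =>
    Cmult (ctilde N A eps k l)
      (Cmult (coh (beta N eps k) n) (Cconj (coh (beta N eps l) m))))).

Definition hs_dist2 (N : nat) (A : nat -> nat -> Cx) (eps : R) : R :=
  Series (fun n => Series (fun m =>
    Cmod (Cminus (Atilde_elem N A eps n m) (A n m)) ^ 2)).

From Stdlib Require Import Reals Lra Lia Psatz Classical FunctionalExtensionality.
From Coquelicot Require Import Coquelicot.
Open Scope R_scope.

(* Put beta_k = eps z^k with z a primitive (N+1)-th root of unity.  The Fock amplitudes of
   |beta_k> are e^{-eps^2/2} eps^n / sqrt(n!) z^{kn}, so summing over k against coefficients
   that are an inverse discrete Fourier transform in k performs Fourier inversion in the photon
   number, up to aliasing modulo N+1.  Consequently the superposition reproduces the target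
   amplitudes exactly for n <= N, while the amplitude at n > N is copied from r = n mod (N+1)
   with the weight eps^(n-r) sqrt(r!/n!), which is O(eps) and decays like 2^(-n/2).  Applied on
   both sides of the operator sum this gives a Hilbert-Schmidt distance O(eps^2) between
   Atilde and A, and applied to the vector A|alpha> it gives fidelity 1 - O(eps^2). *)

(** * Finite sums and discrete Fourier inversion *)

Lemma csum_ext n (f g : nat -> Cx) : (forall k, (k < n)%nat -> f k = g k) -> csum n f = csum n g.
Proof.
  induction n as [|n IH]; intros H; simpl; [reflexivity|].
  rewrite IH by (intros; apply H; lia). rewrite H by lia. reflexivity.
Qed.

Lemma csum_plus n (f g : nat -> Cx) :
  csum n (fun k => Cplus (f k) (g k)) = Cplus (csum n f) (csum n g).
Proof. induction n as [|n IH]; simpl; [ring|]. rewrite IH. ring. Qed.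

Lemma csum_mult_l n c (f : nat -> Cx) : Cmult c (csum n f) = csum n (fun k => Cmult c (f k)).
Proof. induction n as [|n IH]; simpl; [ring|]. rewrite <- IH. ring. Qed.

Lemma csum_mult_r n c (f : nat -> Cx) : Cmult (csum n f) c = csum n (fun k => Cmult (f k) c).
Proof. induction n as [|n IH]; simpl; [ring|]. rewrite <- IH. ring. Qed.

Lemma csum_zero n (f : nat -> Cx) : (forall k, (k < n)%nat -> f k = 0) -> csum n f = 0.
Proof.
  induction n as [|n IH]; intros H; simpl; [reflexivity|].
  rewrite IH by (intros; apply H; lia). rewrite H by lia. ring.
Qed.

Lemma csum_swap n m (f : nat -> nat -> Cx) :
  csum n (fun i => csum m (fun j => f i j)) = csum m (fun j => csum n (fun i => f i j)).
Proof.
  induction n as [|n IH]; simpl.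
  - symmetry. apply csum_zero. reflexivity.
  - rewrite IH, <- csum_plus. reflexivity.
Qed.

Lemma csum_single n r (f : nat -> Cx) :
  (r < n)%nat -> (forall j, (j < n)%nat -> j <> r -> f j = 0) -> csum n f = f r.
Proof.
  induction n as [|n IH]; intros Hr H; [lia|]. simpl.
  destruct (Nat.eq_dec r n) as [->|Hne].
  - rewrite csum_zero by (intros; apply H; lia). ring.
  - rewrite IH by (lia || (intros; apply H; lia)). rewrite (H n) by lia. ring.
Qed.

Lemma csum_const n c : csum n (fun _ => c) = Cmult (RtoC (INR n)) c.
Proof.
  induction n as [|n IH]; simpl csum; [simpl; ring|].
  rewrite IH, S_INR, RtoC_plus. ring.
Qed.

Lemma csum_geom_root q M : Cpow q M = 1 -> q <> 1 -> csum M (fun k => Cpow q k) = 0.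
Proof.
  intros HqM Hq1.
  assert (Hgeom : forall n, Cmult (Cminus q 1) (csum n (fun k => Cpow q k)) = Cminus (Cpow q n) 1).
  { induction n as [|n IH]; simpl; [ring|]. rewrite Cmult_plus_distr_l, IH. ring. }
  assert (Hq : Cminus q 1 <> 0).
  { intros E. apply Hq1. rewrite <- (Cplus_0_l 1), <- E. ring. }
  rewrite <- (Cmult_1_l (csum _ _)), <- (Cinv_l _ Hq), <- Cmult_assoc, Hgeom, HqM. ring.
Qed.

Lemma Cpow_mod M z n : Cpow z M = 1 -> Cpow z n = Cpow z (n mod M).
Proof.
  intros HzM. rewrite (Nat.div_mod_eq n M) at 1.
  rewrite Cpow_add_r, Cpow_mult_r, HzM, Cpow_1_l. ring.
Qed.

Definition primitive_root (M : nat) (z : Cx) : Prop :=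
  Cpow z M = 1 /\ forall d, (0 < d < M)%nat -> Cpow z d <> 1.

Lemma primitive_root_inv M z w :
  primitive_root M z -> Cmult z w = 1 -> primitive_root M w.
Proof.
  intros [HzM Hz] Hzw.
  assert (Hpow : forall d, Cmult (Cpow z d) (Cpow w d) = 1).
  { intros d. rewrite <- Cpow_mult_l, Hzw. apply Cpow_1_l. }
  split.
  - rewrite <- (Hpow M), HzM. ring.
  - intros d Hd Hwd. apply (Hz d Hd). rewrite <- (Hpow d), Hwd. ring.
Qed.

Lemma root_orthogonality M z w n j :
  primitive_root M z -> Cmult z w = 1 -> (j < M)%nat ->
  csum M (fun k => Cmult (Cpow w (k * j)) (Cpow z (k * n))) =
  if Nat.eqb (n mod M) j then RtoC (INR M) else 0.
Proof.
  intros Hz Hzw Hj.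
  pose proof (primitive_root_inv M z w Hz Hzw) as Hw.
  destruct Hz as [HzM Hz], Hw as [HwM Hw].
  set (r := n mod M).
  assert (Hr : (r < M)%nat) by (apply Nat.mod_upper_bound; lia).
  set (q := Cmult (Cpow z r) (Cpow w j)).
  rewrite (csum_ext _ _ (fun k => Cpow q k)).
  2:{ intros k _. unfold q, r. rewrite <- Cpow_mod by exact HzM.
      rewrite Cpow_mult_l, <- !Cpow_mult_r, (Nat.mul_comm k j), (Nat.mul_comm k n). ring. }
  destruct (Nat.eqb_spec r j) as [<-|Hne].
  - unfold q. rewrite <- Cpow_mult_l, Hzw, Cpow_1_l.
    rewrite (csum_ext _ _ (fun _ => 1)) by (intros; apply Cpow_1_l).
    rewrite csum_const. ring.
  - apply csum_geom_root.
    + unfold q. rewrite Cpow_mult_l, <- !Cpow_mult_r, (Nat.mul_comm r), (Nat.mul_comm j).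
      rewrite !Cpow_mult_r, HzM, HwM, !Cpow_1_l. ring.
    + unfold q. destruct (Nat.lt_ge_cases j r) as [Hlt|Hge].
      * replace r with ((r - j) + j)%nat by lia.
        rewrite Cpow_add_r, <- Cmult_assoc, <- Cpow_mult_l, Hzw, Cpow_1_l, Cmult_1_r.
        apply Hz. lia.
      * replace j with ((j - r) + r)%nat by lia.
        rewrite Cpow_add_r, Cmult_comm, <- Cmult_assoc, <- Cpow_mult_l, (Cmult_comm w), Hzw.
        rewrite Cpow_1_l, Cmult_1_r. apply Hw. lia.
Qed.

Lemma dft_inversion M z w (f : nat -> Cx) n :
  primitive_root M z -> Cmult z w = 1 ->
  csum M (fun k => Cmult (csum M (fun j => Cmult (f j) (Cpow w (k * j)))) (Cpow z (k * n))) =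
  Cmult (RtoC (INR M)) (f (n mod M)).
Proof.
  intros Hz Hzw. destruct (Nat.eq_dec M 0) as [->|HM]; [simpl; ring|].
  rewrite (csum_ext _ _ (fun k => csum M (fun j =>
             Cmult (f j) (Cmult (Cpow w (k * j)) (Cpow z (k * n)))))).
  2:{ intros k _. rewrite csum_mult_r. apply csum_ext. intros; ring. }
  rewrite csum_swap.
  rewrite (csum_single _ (n mod M)).
  - rewrite <- (csum_mult_l _ (f _)), root_orthogonality, Nat.eqb_refl
      by (auto; apply Nat.mod_upper_bound; lia).
    ring.
  - apply Nat.mod_upper_bound. lia.
  - intros j Hj Hne. rewrite <- (csum_mult_l _ (f j)), root_orthogonality by auto.
    destruct (Nat.eqb_spec (n mod M) j); [congruence|ring].
Qed.

Lemma inv_fact_le n : / INR (Factorial.fact n) <= 2 * (/ 2) ^ n.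
Proof.
  assert (H : (2 ^ n <= 2 * Factorial.fact n)%nat).
  { induction n as [|[|n] IH]; [simpl; lia | simpl; lia |].
    change (Factorial.fact (S (S n))) with (S (S n) * Factorial.fact (S n))%nat.
    rewrite Nat.pow_succ_r'. nia. }
  apply le_INR in H. rewrite pow_INR, mult_INR in H. change (INR 2) with 2 in H.
  pose proof (INR_fact_lt_0 n). pose proof (pow_lt 2 n ltac:(lra)).
  rewrite pow_inv. apply (Rmult_le_reg_r (INR (Factorial.fact n) * 2 ^ n)); [nra|].
  field_simplify; lra.
Qed.

Lemma sum_f_R0_term_le (a : nat -> R) i n :
  (forall k, 0 <= a k) -> (i <= n)%nat -> a i <= sum_f_R0 a n.
Proof.
  intros Ha Hi. induction n as [|n IH].
  - replace i with 0%nat by lia. simpl. lra.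
  - simpl. pose proof (Ha (S n)). pose proof (cond_pos_sum a n Ha).
    destruct (Nat.eq_dec i (S n)) as [->|Hne]; [lra|].
    pose proof (IH ltac:(lia)). lra.
Qed.

Lemma pow_sq_le_1 x k : Rabs x <= 1 -> (x ^ 2) ^ k <= 1.
Proof.
  intros Hx. rewrite <- (pow1 k). apply pow_incr.
  rewrite <- pow2_abs. pose proof (Rabs_pos x). split; [apply pow2_ge_0 | nra].
Qed.

Lemma Cmod_RtoC_mult_sq r c : Cmod (Cmult (RtoC r) c) ^ 2 = r ^ 2 * Cmod c ^ 2.
Proof. rewrite Cmod_mult, Cmod_R, Rpow_mult_distr, pow2_abs. reflexivity. Qed.

Lemma small_sq_lt X eta : 0 <= X -> 0 < eta ->
  exists delta, 0 < delta <= 1 /\ forall eps, Rabs eps < delta -> eps ^ 2 * X < eta.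
Proof.
  intros HX Heta. exists (Rmin 1 (eta / (X + 1))).
  assert (Hd : 0 < eta / (X + 1)) by (apply Rdiv_lt_0_compat; lra).
  split; [split; [apply Rmin_glb_lt; lra | apply Rmin_l]|].
  intros eps Heps.
  assert (H1 : Rabs eps < 1) by (eapply Rlt_le_trans; [exact Heps | apply Rmin_l]).
  assert (H2 : Rabs eps * (X + 1) < eta).
  { apply (Rmult_lt_compat_r (X + 1)) in Heps; [|lra].
    eapply Rlt_le_trans; [exact Heps|].
    apply (Rle_trans _ (eta / (X + 1) * (X + 1))).
    - apply Rmult_le_compat_r; [lra | apply Rmin_r].
    - right. field. lra. }
  rewrite <- pow2_abs. pose proof (Rabs_pos eps). nra.
Qed.

Lemma one_minus_lt_ratio P c delta :
  0 < P -> 0 <= c -> 2 * c < delta * P -> 1 - delta < P / (P + 2 * c).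
Proof.
  intros HP Hc Hcd. apply (Rmult_lt_reg_r (P + 2 * c)); [lra|].
  unfold Rdiv. rewrite Rmult_assoc, Rinv_l, Rmult_1_r by lra. nra.
Qed.

Lemma is_series_finite (a : nat -> R) N :
  (forall n, (N < n)%nat -> a n = 0) -> is_series a (sum_f_R0 a N).
Proof.
  intros Ha.
  assert (Hstable : forall d, sum_f_R0 a (d + N) = sum_f_R0 a N).
  { induction d as [|d IH]; [reflexivity|]. simpl. rewrite IH, Ha by lia. ring. }
  apply is_series_Reals. intros e He. exists N. intros n Hn.
  replace n with ((n - N) + N)%nat by lia. rewrite Hstable.
  unfold R_dist. rewrite Rminus_diag, Rabs_R0. exact He.
Qed.

Lemma Series_zero : Series (fun _ => 0) = 0.
Proof. apply is_series_unique. exact (is_series_finite (fun _ => 0) 0 (fun _ _ => eq_refl)). Qed.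

Lemma is_series_geom_half c : is_series (fun n => c * (/ 2) ^ n) (2 * c).
Proof.
  assert (Hq : Rabs (/ 2) < 1) by (rewrite Rabs_right; lra).
  apply (is_series_ext (fun n => (/ 2) ^ n * c)); [intros n; apply Rmult_comm|].
  replace (2 * c) with (/ (1 - / 2) * c) by field.
  apply is_series_scal_r, is_series_geom, Hq.
Qed.

Lemma Series_geom_half_le (a : nat -> R) c :
  (forall n, 0 <= a n <= c * (/ 2) ^ n) -> ex_series a /\ 0 <= Series a <= 2 * c.
Proof.
  intros Ha.
  assert (Hgeom : ex_series (fun n => c * (/ 2) ^ n)) by (eexists; apply is_series_geom_half).
  assert (Hex : ex_series a).
  { apply (ex_series_le (V := R_CompleteNormedModule) a (fun n => c * (/ 2) ^ n)); [|exact Hgeom].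
    intros n. specialize (Ha n). change (norm (a n)) with (Rabs (a n)). rewrite Rabs_right; lra. }
  split; [exact Hex | split].
  - rewrite <- Series_zero. apply Series_le; [intros n; specialize (Ha n); lra | exact Hex].
  - rewrite <- (is_series_unique _ _ (is_series_geom_half c)). apply Series_le; auto.
Qed.

(** * Coherent states at the roots of unity *)

Lemma cis_add a b : Cmult (cis a) (cis b) = cis (a + b).
Proof.
  unfold cis, Cmult; simpl. rewrite cos_plus, sin_plus.
  apply injective_projections; simpl; ring.
Qed.

Lemma cis_0 : cis 0 = 1.
Proof. unfold cis. rewrite cos_0, sin_0. reflexivity. Qed.

Lemma cis_pow a n : Cpow (cis a) n = cis (INR n * a).
Proof.
  induction n as [|n IH]; simpl Cpow.
  - rewrite Rmult_0_l, cis_0. reflexivity.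
  - rewrite IH, cis_add, S_INR. f_equal. ring.
Qed.

Lemma cis_conj a : Cconj (cis a) = cis (- a).
Proof. unfold cis, Cconj; simpl. rewrite cos_neg, sin_neg. reflexivity. Qed.

Lemma Cmod_cis a : Cmod (cis a) = 1.
Proof.
  unfold Cmod, cis; cbn [fst snd]. rewrite <- sqrt_1, <- !Rsqr_pow2, Rplus_comm, sin2_cos2.
  reflexivity.
Qed.

Lemma cis_ne_1 t : 0 < t < 2 * PI -> cis t <> 1.
Proof.
  intros Ht E. unfold cis in E. injection E as Ecos Esin.
  apply sin_eq_0_0 in Esin as [k ->].
  pose proof PI_RGT_0.
  assert (Hk : (0 < k < 2)%Z) by (split; apply lt_IZR; nra).
  replace k with 1%Z in Ecos by lia.
  rewrite Rmult_1_l, cos_PI in Ecos. lra.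
Qed.

Definition unit_root (N : nat) : Cx := cis (2 * PI / INR (S N)).

Lemma unit_root_mul_conj N : Cmult (unit_root N) (Cconj (unit_root N)) = 1.
Proof. unfold unit_root. rewrite cis_conj, cis_add, Rplus_opp_r. apply cis_0. Qed.

Lemma unit_root_primitive N : primitive_root (S N) (unit_root N).
Proof.
  pose proof (lt_0_INR (S N) ltac:(lia)) as HM. pose proof PI_RGT_0.
  unfold unit_root. split.
  - rewrite cis_pow. replace (INR (S N) * (2 * PI / INR (S N))) with (2 * PI) by (field; lra).
    unfold cis. rewrite cos_2PI, sin_2PI. reflexivity.
  - intros d Hd. rewrite cis_pow. apply cis_ne_1.
    assert (0 < INR d < INR (S N)) by (split; [apply lt_0_INR | apply lt_INR]; lia).
    replace (INR d * (2 * PI / INR (S N))) with (INR d / INR (S N) * (2 * PI)) by (field; lra).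
    assert (0 < INR d / INR (S N) < 1).
    { split; [apply Rdiv_lt_0_compat; lra|].
      apply (Rmult_lt_reg_r (INR (S N))); [lra|].
      unfold Rdiv. rewrite Rmult_assoc, Rinv_l by lra. lra. }
    nra.
Qed.

Lemma beta_unit_root N eps k : beta N eps k = Cmult (RtoC eps) (Cpow (unit_root N) k).
Proof.
  unfold beta, unit_root. rewrite cis_pow. do 2 f_equal.
  pose proof (lt_0_INR (S N) ltac:(lia)). field. lra.
Qed.

Lemma cis_phase_unit_root N k n l m :
  cis (- (2 * PI * (INR k * INR n - INR l * INR m)) / INR (S N)) =
  Cmult (Cpow (Cconj (unit_root N)) (k * n)) (Cpow (unit_root N) (l * m)).
Proof.
  unfold unit_root. rewrite cis_conj, !cis_pow, cis_add, !mult_INR. f_equal.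
  pose proof (lt_0_INR (S N) ltac:(lia)). field. lra.
Qed.

Definition coh_amp (eps : R) (n : nat) : R :=
  exp (- (eps ^ 2) / 2) / sqrt (INR (Factorial.fact n)) * eps ^ n.

Lemma coh_beta N eps k n :
  coh (beta N eps k) n = Cmult (RtoC (coh_amp eps n)) (Cpow (unit_root N) (k * n)).
Proof.
  unfold coh, coh_amp. rewrite beta_unit_root, Cmod_mult, Cmod_R, Cmod_pow.
  unfold unit_root at 1. rewrite Cmod_cis, pow1, Rmult_1_r, pow2_abs.
  rewrite Cpow_mult_l, Cpow_mult_r, <- RtoC_pow, !RtoC_mult. ring.
Qed.

Lemma coh_beta_conj N eps k n :
  Cconj (coh (beta N eps k) n) =
  Cmult (RtoC (coh_amp eps n)) (Cpow (Cconj (unit_root N)) (k * n)).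
Proof.
  rewrite coh_beta, Cmult_conj, Cpow_conj. f_equal.
  unfold Cconj, RtoC; simpl. f_equal. ring.
Qed.

(** * Aliasing of photon numbers modulo N+1 *)

Definition fock_scale (eps : R) (n : nat) : R := sqrt (INR (Factorial.fact n)) / eps ^ n.

Definition alias_weight (N : nat) (eps : R) (n : nat) : R :=
  eps ^ (n - n mod S N) *
  (sqrt (INR (Factorial.fact (n mod S N))) / sqrt (INR (Factorial.fact n))).

Lemma coh_amp_fock_scale eps n r : eps <> 0 -> (r <= n)%nat ->
  exp (eps ^ 2 / 2) * coh_amp eps n * fock_scale eps r =
  eps ^ (n - r) * (sqrt (INR (Factorial.fact r)) / sqrt (INR (Factorial.fact n))).
Proof.
  intros Heps Hrn. unfold coh_amp, fock_scale.
  assert (Hexp : exp (eps ^ 2 / 2) * exp (- (eps ^ 2) / 2) = 1).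
  { rewrite <- exp_plus, <- exp_0. f_equal. field. }
  assert (Hpow : eps ^ n = eps ^ (n - r) * eps ^ r) by (rewrite <- pow_add; f_equal; lia).
  pose proof (sqrt_lt_R0 _ (INR_fact_lt_0 n)).
  pose proof (pow_nonzero eps r Heps).
  transitivity (exp (eps ^ 2 / 2) * exp (- (eps ^ 2) / 2) *
    (eps ^ (n - r) * (sqrt (INR (Factorial.fact r)) / sqrt (INR (Factorial.fact n))))).
  - rewrite Hpow. field. lra.
  - rewrite Hexp. ring.
Qed.

Definition ctilde_vec (N : nat) (eps : R) (psi : state) (k : nat) : Cx :=
  Cmult (RtoC (exp (eps ^ 2 / 2) / INR (S N)))
    (csum (S N) (fun j => Cmult (Cmult (RtoC (fock_scale eps j)) (psi j))
                                (Cpow (Cconj (unit_root N)) (k * j)))).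

Lemma superpos_ctilde_vec N eps psi n : eps <> 0 ->
  superpos (S N) (ctilde_vec N eps psi) (beta N eps) n =
  Cmult (RtoC (alias_weight N eps n)) (psi (n mod S N)).
Proof.
  intros Heps. unfold superpos, ctilde_vec.
  set (z := unit_root N).
  set (g := fun j => Cmult (RtoC (fock_scale eps j)) (psi j)).
  pose proof (lt_0_INR (S N) ltac:(lia)) as HM.
  transitivity (Cmult (RtoC (exp (eps ^ 2 / 2) / INR (S N) * coh_amp eps n))
    (csum (S N) (fun k => Cmult (csum (S N) (fun j => Cmult (g j) (Cpow (Cconj z) (k * j))))
                               (Cpow z (k * n))))).
  { rewrite csum_mult_l. apply csum_ext. intros k _.
    unfold g, z. rewrite coh_beta, RtoC_mult. ring. }
  rewrite (dft_inversion _ z) by (apply unit_root_primitive || apply unit_root_mul_conj).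
  unfold alias_weight, g. rewrite <- coh_amp_fock_scale by (auto; apply Nat.Div0.mod_le).
  replace (exp (eps ^ 2 / 2) * coh_amp eps n * fock_scale eps (n mod S N))
    with (exp (eps ^ 2 / 2) / INR (S N) * coh_amp eps n * INR (S N) * fock_scale eps (n mod S N))
    by (field; lra).
  rewrite !RtoC_mult. ring.
Qed.

Definition rescaled_matrix (eps : R) (A : nat -> nat -> Cx) (j i : nat) : Cx :=
  Cmult (RtoC (fock_scale eps j * fock_scale eps i)) (A j i).

Lemma ctilde_unit_root N A eps k l :
  ctilde N A eps k l =
  Cmult (RtoC (exp (eps ^ 2 / 2) ^ 2 / INR (S N) ^ 2))
    (csum (S N) (fun j => csum (S N) (fun i =>
       Cmult (rescaled_matrix eps A j i)
             (Cmult (Cpow (Cconj (unit_root N)) (k * j)) (Cpow (unit_root N) (l * i)))))).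
Proof.
  unfold ctilde. f_equal.
  - replace (exp (eps ^ 2 / 2) ^ 2) with (exp (eps ^ 2 / 2) * exp (eps ^ 2 / 2)) by ring.
    rewrite pow2_abs, <- exp_plus. replace (eps ^ 2 / 2 + eps ^ 2 / 2) with (eps ^ 2) by field.
    reflexivity.
  - apply csum_ext. intros j _. apply csum_ext. intros i _.
    rewrite cis_phase_unit_root. unfold rescaled_matrix, fock_scale.
    rewrite sqrt_mult, pow_add by apply pos_INR. unfold Rdiv. rewrite Rinv_mult, !RtoC_mult.
    ring.
Qed.

Lemma Atilde_elem_row N A eps k n m :
  csum (S N) (fun l => Cmult (ctilde N A eps k l)
    (Cmult (coh (beta N eps k) n) (Cconj (coh (beta N eps l) m)))) =
  Cmult (RtoC (exp (eps ^ 2 / 2) ^ 2 / INR (S N) ^ 2 * coh_amp eps n * coh_amp eps m * INR (S N)))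
    (Cmult (csum (S N) (fun j =>
              Cmult (rescaled_matrix eps A j (m mod S N)) (Cpow (Cconj (unit_root N)) (k * j))))
           (Cpow (unit_root N) (k * n))).
Proof.
  set (M := S N). set (z := unit_root N). set (w := Cconj z).
  set (F := rescaled_matrix eps A).
  set (C := exp (eps ^ 2 / 2) ^ 2 / INR M ^ 2 * coh_amp eps n * coh_amp eps m).
  assert (Hw : primitive_root M w)
    by exact (primitive_root_inv M z w (unit_root_primitive N) (unit_root_mul_conj N)).
  assert (Hwz : Cmult w z = 1) by (rewrite Cmult_comm; apply unit_root_mul_conj).
  transitivity (Cmult (RtoC C) (Cmult (csum M (fun l =>
      Cmult (csum M (fun i => Cmult (csum M (fun j => Cmult (F j i) (Cpow w (k * j))))
                                    (Cpow z (l * i))))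
            (Cpow w (l * m)))) (Cpow z (k * n)))).
  - rewrite (csum_mult_r M (Cpow z (k * n))), (csum_mult_l M (RtoC C)).
    apply csum_ext. intros l _.
    rewrite ctilde_unit_root, coh_beta, coh_beta_conj, csum_swap. fold z w M F.
    rewrite (csum_ext _ _ (fun i => Cmult (csum M (fun j => Cmult (F j i) (Cpow w (k * j))))
                                         (Cpow z (l * i)))).
    2:{ intros i _. rewrite csum_mult_r. apply csum_ext. intros j _. ring. }
    unfold C. rewrite !RtoC_mult. ring.
  - rewrite (dft_inversion M w z), RtoC_mult by assumption. ring.
Qed.

Lemma Atilde_elem_alias N A eps n m : eps <> 0 ->
  Atilde_elem N A eps n m =
  Cmult (RtoC (alias_weight N eps n * alias_weight N eps m)) (A (n mod S N) (m mod S N)).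
Proof.
  intros Heps. unfold Atilde_elem.
  rewrite (csum_ext _ _ _ (fun k _ => Atilde_elem_row N A eps k n m)).
  rewrite <- csum_mult_l, dft_inversion by (apply unit_root_primitive || apply unit_root_mul_conj).
  set (M := S N). set (E := exp (eps ^ 2 / 2)).
  assert (Hweight : forall p, alias_weight N eps p = E * coh_amp eps p * fock_scale eps (p mod M)).
  { intros p. symmetry. apply coh_amp_fock_scale; [exact Heps | apply Nat.Div0.mod_le]. }
  rewrite !Hweight. unfold rescaled_matrix.
  pose proof (lt_0_INR M ltac:(unfold M; lia)).
  replace (E * coh_amp eps n * fock_scale eps (n mod M) *
           (E * coh_amp eps m * fock_scale eps (m mod M)))
    with (E ^ 2 / INR M ^ 2 * coh_amp eps n * coh_amp eps m * INR M * INR M *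
          (fock_scale eps (n mod M) * fock_scale eps (m mod M)))
    by (field; lra).
  rewrite !RtoC_mult. ring.
Qed.

Lemma alias_weight_small N eps n : (n <= N)%nat -> alias_weight N eps n = 1.
Proof.
  intros Hn. unfold alias_weight. rewrite Nat.mod_small, Nat.sub_diag by lia.
  pose proof (sqrt_lt_R0 _ (INR_fact_lt_0 n)). field. lra.
Qed.

(** * Size of the aliased amplitudes *)

Definition fock_envelope (N n : nat) : R := 2 * INR (Factorial.fact N) * (/ 2) ^ n.

Lemma fock_envelope_nonneg N n : 0 <= fock_envelope N n.
Proof.
  unfold fock_envelope. pose proof (INR_fact_lt_0 N). pose proof (pow_le (/ 2) n ltac:(lra)).
  nra.
Qed.

Lemma alias_weight_sq_le N eps n :
  alias_weight N eps n ^ 2 <=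
  (eps ^ 2) ^ (n - n mod S N) * fock_envelope N n.
Proof.
  set (r := n mod S N).
  assert (Hr : (r <= N)%nat) by (pose proof (Nat.mod_upper_bound n (S N)); unfold r; lia).
  pose proof (INR_fact_lt_0 n). pose proof (INR_fact_lt_0 r).
  unfold alias_weight. fold r.
  rewrite Rpow_mult_distr, <- pow_mult, Nat.mul_comm, pow_mult, <- sqrt_div_alt, pow2_sqrt
    by (try apply Rdiv_le_0_compat; lra).
  apply Rmult_le_compat_l; [apply pow_le, pow2_ge_0|].
  unfold fock_envelope.
  replace (2 * INR (Factorial.fact N) * (/ 2) ^ n)
    with (INR (Factorial.fact N) * (2 * (/ 2) ^ n)) by ring.
  apply Rmult_le_compat; [lra | left; apply Rinv_0_lt_compat; lra | | apply inv_fact_le].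
  apply le_INR, Factorial.fact_le. exact Hr.
Qed.

Lemma alias_weight_sq_le_envelope N eps n :
  Rabs eps <= 1 -> alias_weight N eps n ^ 2 <= fock_envelope N n.
Proof.
  intros Heps. eapply Rle_trans; [apply alias_weight_sq_le|].
  rewrite <- (Rmult_1_l (fock_envelope N n)) at 2.
  apply Rmult_le_compat_r; [apply fock_envelope_nonneg | apply pow_sq_le_1, Heps].
Qed.

Lemma alias_weight_sq_le_tail N eps n :
  Rabs eps <= 1 -> (N < n)%nat -> alias_weight N eps n ^ 2 <= eps ^ 2 * fock_envelope N n.
Proof.
  intros Heps Hn. eapply Rle_trans; [apply alias_weight_sq_le|].
  assert (Hr : (n mod S N <= N)%nat) by (pose proof (Nat.mod_upper_bound n (S N)); lia).
  replace (n - n mod S N)%nat with (S (n - n mod S N - 1)) by lia.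
  rewrite <- tech_pow_Rmult, Rmult_assoc.
  apply Rmult_le_compat_l; [apply pow2_ge_0|].
  rewrite <- (Rmult_1_l (fock_envelope N n)) at 2.
  apply Rmult_le_compat_r; [apply fock_envelope_nonneg | apply pow_sq_le_1, Heps].
Qed.

Lemma alias_weight_prod_sq_le N eps n m :
  Rabs eps <= 1 -> (N < n \/ N < m)%nat ->
  (alias_weight N eps n * alias_weight N eps m) ^ 2 <=
  eps ^ 2 * (fock_envelope N n * fock_envelope N m).
Proof.
  intros Heps Hnm. rewrite Rpow_mult_distr.
  pose proof (pow2_ge_0 (alias_weight N eps n)). pose proof (pow2_ge_0 (alias_weight N eps m)).
  destruct Hnm as [Hn|Hm].
  - rewrite <- Rmult_assoc. apply Rmult_le_compat; auto.
    + apply alias_weight_sq_le_tail; auto.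
    + apply alias_weight_sq_le_envelope; auto.
  - rewrite (Rmult_comm (fock_envelope N n)), <- Rmult_assoc, (Rmult_comm (_ ^ 2)).
    apply Rmult_le_compat; auto.
    + apply alias_weight_sq_le_tail; auto.
    + apply alias_weight_sq_le_envelope; auto.
Qed.

Definition block_norm2 (N : nat) (A : nat -> nat -> Cx) : R :=
  sum_f_R0 (fun i => sum_f_R0 (fun j => Cmod (A i j) ^ 2) N) N.

Lemma block_norm2_nonneg N A : 0 <= block_norm2 N A.
Proof. apply cond_pos_sum. intros; apply cond_pos_sum. intros; apply pow2_ge_0. Qed.

Lemma Cmod_sq_le_block_norm2 N A i j :
  (i <= N)%nat -> (j <= N)%nat -> Cmod (A i j) ^ 2 <= block_norm2 N A.
Proof.
  intros Hi Hj. unfold block_norm2.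
  eapply Rle_trans; [| apply (sum_f_R0_term_le (fun i => sum_f_R0 _ N) i); auto].
  - apply (sum_f_R0_term_le (fun j => Cmod (A i j) ^ 2)); auto. intros; apply pow2_ge_0.
  - intros. apply cond_pos_sum. intros; apply pow2_ge_0.
Qed.

Lemma Atilde_elem_tail_sq_le N A eps n m :
  eps <> 0 -> Rabs eps <= 1 -> (N < n \/ N < m)%nat ->
  Cmod (Atilde_elem N A eps n m) ^ 2 <=
  eps ^ 2 * block_norm2 N A * (fock_envelope N n * fock_envelope N m).
Proof.
  intros Heps Heps1 Hnm.
  assert (Hmod : forall p, (p mod S N <= N)%nat)
    by (intros p; pose proof (Nat.mod_upper_bound p (S N)); lia).
  rewrite Atilde_elem_alias, Cmod_RtoC_mult_sq by exact Heps.
  replace (eps ^ 2 * block_norm2 N A * (fock_envelope N n * fock_envelope N m))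
    with (eps ^ 2 * (fock_envelope N n * fock_envelope N m) * block_norm2 N A) by ring.
  apply Rmult_le_compat; [apply pow2_ge_0 | apply pow2_ge_0 | |].
  - apply alias_weight_prod_sq_le; auto.
  - apply Cmod_sq_le_block_norm2; auto.
Qed.

Lemma hs_term_le N A eps n m :
  (forall n m : nat, (N < n)%nat \/ (N < m)%nat -> A n m = RtoC 0) ->
  eps <> 0 -> Rabs eps <= 1 ->
  Cmod (Cminus (Atilde_elem N A eps n m) (A n m)) ^ 2 <=
  eps ^ 2 * block_norm2 N A * (fock_envelope N n * fock_envelope N m).
Proof.
  intros HA Heps Heps1.
  destruct (Nat.le_gt_cases n N) as [Hn|Hn]; [destruct (Nat.le_gt_cases m N) as [Hm|Hm]|].
  - rewrite Atilde_elem_alias, !Nat.mod_small, !alias_weight_small by (auto || lia).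
    replace (Cminus (Cmult (RtoC (1 * 1)) (A n m)) (A n m)) with (RtoC 0)
      by (rewrite Rmult_1_l; ring).
    rewrite Cmod_0, pow_i by lia.
    pose proof (block_norm2_nonneg N A). pose proof (pow2_ge_0 eps).
    pose proof (fock_envelope_nonneg N n). pose proof (fock_envelope_nonneg N m).
    apply Rmult_le_pos; apply Rmult_le_pos; assumption.
  all: rewrite HA by lia; replace (Cminus _ (RtoC 0)) with (Atilde_elem N A eps n m) by ring.
  all: apply Atilde_elem_tail_sq_le; [exact Heps | exact Heps1 | lia].
Qed.

Lemma hs_dist2_le N A eps :
  (forall n m : nat, (N < n)%nat \/ (N < m)%nat -> A n m = RtoC 0) ->
  eps <> 0 -> Rabs eps <= 1 ->
  hs_dist2 N A eps <= eps ^ 2 * (block_norm2 N A * (4 * INR (Factorial.fact N)) ^ 2).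
Proof.
  intros HA Heps Heps1. unfold hs_dist2.
  set (K := eps ^ 2 * block_norm2 N A * (2 * INR (Factorial.fact N)) ^ 2).
  assert (Hrow : forall n,
    0 <= Series (fun m => Cmod (Cminus (Atilde_elem N A eps n m) (A n m)) ^ 2)
      <= 2 * K * (/ 2) ^ n).
  { intros n. rewrite Rmult_assoc. apply Series_geom_half_le. intros m.
    split; [apply pow2_ge_0|].
    eapply Rle_trans; [apply hs_term_le; auto|].
    unfold fock_envelope, K. apply Req_le. ring. }
  destruct (Series_geom_half_le _ _ Hrow) as [_ [_ Hle]].
  unfold K in Hle. lra.
Qed.

Lemma hs_dist2_small N A :
  (forall n m : nat, (N < n)%nat \/ (N < m)%nat -> A n m = RtoC 0) ->
  forall eta : R, 0 < eta ->
    exists delta : R, 0 < delta /\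
      forall eps : R, eps <> 0 -> Rabs eps < delta -> hs_dist2 N A eps < eta.
Proof.
  intros HA eta Heta.
  assert (HX : 0 <= block_norm2 N A * (4 * INR (Factorial.fact N)) ^ 2).
  { apply Rmult_le_pos; [apply block_norm2_nonneg | apply pow2_ge_0]. }
  destruct (small_sq_lt _ eta HX Heta) as [delta [[Hd0 Hd1] Hsmall]].
  exists delta. split; [exact Hd0|]. intros eps Heps Hlt.
  eapply Rle_lt_trans; [apply hs_dist2_le; auto; lra | apply Hsmall, Hlt].
Qed.

(** * Fidelity of the approximating superposition *)

Lemma inner_of_agree (psi phi : state) :
  (forall n, psi n = 0 \/ phi n = psi n) -> inner psi phi = RtoC (norm2 psi).
Proof.
  intros Hagree.
  assert (Hterm : forall n, Cmult (Cconj (psi n)) (phi n) = RtoC (Cmod (psi n) ^ 2)).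
  { intros n. destruct (Hagree n) as [E|E]; rewrite E.
    - rewrite Cmod_0. apply injective_projections; simpl; ring.
    - rewrite Cmod2_conj. apply Cmult_comm. }
  unfold inner, norm2.
  rewrite (Series_ext _ _ (fun n => f_equal Re (Hterm n))).
  rewrite (Series_ext _ _ (fun n => f_equal Im (Hterm n))).
  simpl. rewrite Series_zero. reflexivity.
Qed.

Lemma fidelity_ge (psi phi : state) c :
  ex_series (fun n => Cmod (psi n) ^ 2) -> 0 < norm2 psi ->
  (forall n, psi n = 0 \/ phi n = psi n) ->
  (forall n, Cmod (phi n) ^ 2 <= Cmod (psi n) ^ 2 + c * (/ 2) ^ n) ->
  norm2 psi / (norm2 psi + 2 * c) <= fidelity psi phi.
Proof.
  intros Hex HP Hagree Hphi.
  assert (Hmono : forall n, 0 <= Cmod (psi n) ^ 2 <= Cmod (phi n) ^ 2).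
  { intros n. split; [apply pow2_ge_0|]. destruct (Hagree n) as [E|E]; rewrite E; [|lra].
    rewrite Cmod_0, pow_i by lia. apply pow2_ge_0. }
  assert (Hexb : ex_series (fun n => Cmod (psi n) ^ 2 + c * (/ 2) ^ n)).
  { apply (ex_series_plus (V := R_NormedModule)); [exact Hex|].
    eexists. apply is_series_geom_half. }
  assert (Hexphi : ex_series (fun n => Cmod (phi n) ^ 2)).
  { apply (ex_series_le (V := R_CompleteNormedModule) _
             (fun n => Cmod (psi n) ^ 2 + c * (/ 2) ^ n)); [|exact Hexb].
    intros n. change (norm _) with (Rabs (Cmod (phi n) ^ 2)).
    rewrite Rabs_right by (apply Rle_ge, pow2_ge_0). apply Hphi. }
  assert (HQ1 : norm2 psi <= norm2 phi) by (apply Series_le; assumption).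
  assert (HQ2 : norm2 phi <= norm2 psi + 2 * c).
  { unfold norm2. eapply Rle_trans.
    - apply Series_le; [intros n; split; [apply pow2_ge_0 | apply Hphi] | exact Hexb].
    - rewrite Series_plus, (is_series_unique _ _ (is_series_geom_half c)); [lra | exact Hex |].
      eexists. apply is_series_geom_half. }
  unfold fidelity. rewrite inner_of_agree, Cmod_R, pow2_abs by exact Hagree.
  replace (norm2 psi ^ 2 / (norm2 psi * norm2 phi)) with (norm2 psi / norm2 phi) by (field; lra).
  unfold Rdiv. apply Rmult_le_compat_l; [lra|]. apply Rinv_le_contravar; lra.
Qed.

Lemma superpos_ctilde_vec_small N eps psi n :
  eps <> 0 -> (n <= N)%nat -> superpos (S N) (ctilde_vec N eps psi) (beta N eps) n = psi n.
Proof.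
  intros Heps Hn. rewrite superpos_ctilde_vec, alias_weight_small, Nat.mod_small by (auto || lia).
  ring.
Qed.

Lemma superpos_ctilde_vec_sq_le N eps (psi : state) B n :
  eps <> 0 -> Rabs eps <= 1 ->
  (forall n, (N < n)%nat -> psi n = RtoC 0) ->
  (forall r, (r <= N)%nat -> Cmod (psi r) ^ 2 <= B) ->
  Cmod (superpos (S N) (ctilde_vec N eps psi) (beta N eps) n) ^ 2 <=
  Cmod (psi n) ^ 2 + eps ^ 2 * B * fock_envelope N n.
Proof.
  intros Heps Heps1 Hpsi HB.
  destruct (Nat.le_gt_cases n N) as [Hn|Hn].
  - rewrite superpos_ctilde_vec_small by assumption.
    assert (0 <= B) by (eapply Rle_trans; [apply pow2_ge_0 | apply (HB 0%nat); lia]).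
    pose proof (pow2_ge_0 eps). pose proof (fock_envelope_nonneg N n).
    assert (0 <= eps ^ 2 * B * fock_envelope N n)
      by (apply Rmult_le_pos; [apply Rmult_le_pos|]; assumption).
    lra.
  - rewrite Hpsi, Cmod_0, pow_i, Rplus_0_l by lia.
    rewrite superpos_ctilde_vec, Cmod_RtoC_mult_sq by exact Heps.
    rewrite Rmult_assoc, (Rmult_comm B), <- Rmult_assoc.
    apply Rmult_le_compat; [apply pow2_ge_0 | apply pow2_ge_0 | |].
    + apply alias_weight_sq_le_tail; assumption.
    + apply HB. pose proof (Nat.mod_upper_bound n (S N)). lia.
Qed.

Lemma sum_sq_pos_of_nonzero N (psi : state) :
  (forall n, (N < n)%nat -> psi n = RtoC 0) -> psi <> (fun _ => RtoC 0) ->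
  0 < sum_f_R0 (fun n => Cmod (psi n) ^ 2) N.
Proof.
  intros Hpsi Hne.
  destruct (not_all_ex_not _ _ (fun H => Hne (functional_extensionality _ _ H))) as [i Hi].
  assert (HiN : (i <= N)%nat).
  { destruct (Nat.le_gt_cases i N) as [|Hlt]; [assumption | contradiction (Hi (Hpsi i Hlt))]. }
  eapply Rlt_le_trans; [| apply (sum_f_R0_term_le (fun n => Cmod (psi n) ^ 2) i N)].
  - apply pow_lt, Cmod_gt_0, Hi.
  - intros; apply pow2_ge_0.
  - exact HiN.
Qed.

Lemma approx_coherent_rank_le_finite N (psi : state) :
  (forall n, (N < n)%nat -> psi n = RtoC 0) -> approx_coherent_rank_le (S N) psi.
Proof.
  intros Hpsi. destruct (classic (psi = fun _ => RtoC 0)) as [E|Hne]; [left; exact E | right].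
  intros delta Hdelta.
  set (P := sum_f_R0 (fun n => Cmod (psi n) ^ 2) N).
  assert (HP : is_series (fun n => Cmod (psi n) ^ 2) P).
  { apply is_series_finite. intros n Hn. rewrite Hpsi, Cmod_0 by exact Hn. ring. }
  assert (Hnorm : norm2 psi = P) by (apply is_series_unique, HP).
  assert (HPpos : 0 < P) by (apply sum_sq_pos_of_nonzero; assumption).
  assert (HX : 0 <= 4 * INR (Factorial.fact N)) by (pose proof (INR_fact_lt_0 N); lra).
  destruct (small_sq_lt _ delta HX Hdelta) as [d [[Hd0 Hd1] Hsmall]].
  set (eps := d / 2).
  assert (Habs : Rabs eps = d / 2) by (apply Rabs_right; unfold eps; lra).
  assert (Heps : eps <> 0) by (unfold eps; lra).
  set (c := eps ^ 2 * P * (2 * INR (Factorial.fact N))).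
  exists (ctilde_vec N eps psi), (beta N eps).
  apply Rlt_gt, (Rlt_le_trans _ (P / (P + 2 * c))).
  - apply one_minus_lt_ratio; [exact HPpos | |].
    + unfold c. pose proof (pow2_ge_0 eps). pose proof (INR_fact_lt_0 N).
      apply Rmult_le_pos; [apply Rmult_le_pos|]; lra.
    + replace (2 * c) with (eps ^ 2 * (4 * INR (Factorial.fact N)) * P) by (unfold c; ring).
      apply Rmult_lt_compat_r; [exact HPpos | apply Hsmall; rewrite Habs; lra].
  - rewrite <- Hnorm. apply fidelity_ge.
    + eexists. exact HP.
    + rewrite Hnorm. exact HPpos.
    + intros n. destruct (Nat.le_gt_cases n N) as [Hn|Hn].
      * right. apply superpos_ctilde_vec_small; assumption.
      * left. apply Hpsi, Hn.
    + intros n. eapply Rle_trans.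
      * apply (superpos_ctilde_vec_sq_le N eps psi P);
          [exact Heps | rewrite Habs; lra | exact Hpsi |].
        intros r Hr. apply (sum_f_R0_term_le (fun n => Cmod (psi n) ^ 2)); [|exact Hr].
        intros; apply pow2_ge_0.
      * unfold c, fock_envelope. right. ring.
Qed.

Theorem proposition2 (N : nat) (A : nat -> nat -> Cx)
  (HA : forall n m : nat, (N < n)%nat \/ (N < m)%nat -> A n m = RtoC 0) :
  approx_op_coherent_rank_le (S N) (op_apply N A)
  /\ (forall eta : R, 0 < eta ->
        exists delta : R, 0 < delta /\
          forall eps : R, eps <> 0 -> Rabs eps < delta ->
            hs_dist2 N A eps < eta).
Proof.
  split.
  - intros alpha. apply approx_coherent_rank_le_finite. intros n Hn.
    unfold op_apply. apply csum_zero. intros m _. rewrite HA by (left; exact Hn). ring.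
  - exact (hs_dist2_small N A HA).
Qed.
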